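(* Let $0<a_1<a_2<\cdots<a_n$, $A_i:=a_1+\cdots+a_i$, $A_{i:j}:=\sum_{k=i}^ja_k$, and for a permutation $\pi$ of $\{1,\dots,n\}$, $A_{\pi(i)}:=a_{\pi(1)}+\cdots+a_{\pi(i)}$. Let $f$ be a positive differentiable function on $[0,\infty)$ with $0<\inf f\le\sup f<\infty$. (i) If $f$ is strictly decreasing on $[0,A_n]$, then $$\sum_{i=1}^n a_i\int_0^{A_i}f(s)\,ds<\sum_{i=1}^n a_{\pi(i)}\int_0^{A_{\pi(i)}}f(s)\,ds$$ for every permutation $\pi$ with $(\pi(1),\dots,\pi(n))\ne(1,2,\dots,n)$. (ii) If $f$ is strictly increasing on $[0,A_n]$, then $$\sum_{i=1}^n a_{n+1-i}\int_0^{A_{n+1-i:n}}f(s)\,ds<\sum_{i=1}^n a_{\pi(i)}\int_0^{A_{\pi(i)}}f(s)\,ds$$ for every permutation $\pi$ with $(\pi(1),\dots,\pi(n))\ne(n,n-1,\dots,1)$. *)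

From HB Require Import structures.
From mathcomp Require Import all_boot all_order all_algebra all_fingroup.
From mathcomp Require Import all_classical all_reals all_analysis.
Set Implicit Arguments. Unset Strict Implicit. Unset Printing Implicit Defensive.
Import Order.TTheory GRing.Theory Num.Theory.
Local Open Scope ring_scope.
Local Open Scope classical_set_scope.

Definition intF (R : realType) (f : R -> R) (t : R) : R :=
  Rintegral (@lebesgue_measure R) `[0, t] f.

Definition psum (R : realType) (n : nat) (a : 'I_n -> R) (s : 'I_n -> 'I_n)
  (i : 'I_n) : R := \sum_(j < n | (j <= i)%N) a (s j).

Definition wsum (R : realType) (n : nat) (a : 'I_n -> R) (f : R -> R)
  (s : 'I_n -> 'I_n) : R :=
  \sum_(i < n) a (s i) * intF f (psum a s i).

From HB Require Import structures.
From mathcomp Require Import all_boot all_order all_algebra all_fingroup.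
From mathcomp Require Import all_classical all_reals all_analysis.
From mathcomp Require Import zify ring lra.
Set Implicit Arguments. Unset Strict Implicit.
Import Order.TTheory GRing.Theory Num.Theory.
Local Open Scope ring_scope.

(* Let F t := \int_0^t f.  Exchanging two adjacent entries x, y that follow a
   prefix of total p changes the weighted sum by
     x F(p+x) + y F(p+x+y) - y F(p+y) - x F(p+x+y) = y (x - y) (f c1 - f c2)
   for some 0 < c1 < c2 < p + x + y, by the mean value theorem applied to F on
   [p+y, p+x] and on [p+x, p+x+y].  So when f is strictly decreasing, undoing
   an adjacent descent strictly lowers the sum, and when f is strictly
   increasing, undoing an adjacent ascent does.  Every permutation other than
   the identity has an adjacent descent (other than the reversal, an adjacent
   ascent), so the minimum over the finite group S_n is attained only at the
   identity (resp. the reversal). *)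

Lemma strict_min_of_improvable (T : finType) d (U : orderType d) (W : T -> U)
    (t0 : T) :
  (forall t, t != t0 -> exists t', (W t' < W t)%O) ->
  forall t, t != t0 -> (W t0 < W t)%O.
Proof.
move=> improve.
have [tm _ tm_min] := arg_minP W (erefl : xpredT t0).
have tm_t0 : tm = t0.
  apply/eqP; apply: contraT => /improve[t'].
  by rewrite ltNge tm_min.
move=> t /improve[t' lt_t']; apply: le_lt_trans lt_t'.
by rewrite -tm_t0 tm_min.
Qed.

Lemma perm_ge_id {n} (s : 'S_n) : (forall i : 'I_n, (i <= s i)%N) -> s = 1%g.
Proof.
move=> ge_s; apply/permP => i; apply: val_inj; apply/eqP.
rewrite perm1 eqn_leq ge_s andbT.
have : (\sum_j (s j - j) == 0)%N.
  by rewrite sumnB // [X in (_ - X)%N](reindex_inj (@perm_inj _ s)) subnn.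
by rewrite sum_nat_eq0 => /forallP/(_ i); rewrite subn_eq0.
Qed.

Lemma exists_adj_descent {n} (s : 'S_n) : s != 1%g ->
  exists i i1 : 'I_n, val i1 = i.+1 /\ (s i1 < s i)%N.
Proof.
apply: contraNP => no_descent; apply/eqP/perm_ge_id.
suff ge_s k (lt_kn : (k < n)%N) : (k <= s (Ordinal lt_kn))%N by case=> k lt_kn.
elim: k lt_kn => // k IHk lt_kn.
have lt_kn' : (k < n)%N by apply: ltnW.
apply: leq_ltn_trans (IHk lt_kn') _; rewrite ltn_neqAle; apply/andP; split.
  by apply/eqP => /val_inj/perm_inj/(congr1 val)/= /n_Sn.
rewrite leqNgt; apply/negP => desc; apply: no_descent.
by exists (Ordinal lt_kn'), (Ordinal lt_kn).
Qed.

Definition rev_perm n : 'S_n := perm (@rev_ord_inj n).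

Lemma exists_adj_ascent {n} (s : 'S_n) : s != rev_perm n ->
  exists i i1 : 'I_n, val i1 = i.+1 /\ (s i < s i1)%N.
Proof.
move=> s_rev; have sr_ne1 : (s * rev_perm n)%g != 1%g.
  apply: contraNneq s_rev => sr1; apply/eqP/permP => i.
  apply: (@perm_inj _ (rev_perm n)).
  by rewrite -permM sr1 perm1 !permE rev_ordK.
have [i [i1 [i1E desc]]] := exists_adj_descent sr_ne1.
exists i, i1; split => //; move: desc; rewrite !permM !permE /=.
by have := ltn_ord (s i); have := ltn_ord (s i1); lia.
Qed.

Section PrefixIntegral.
Variables (R : realType) (f : R -> R).
Hypothesis f_der : forall x, 0 <= x -> derivable f x 1.

Lemma intF_derive x :
  0 < x -> derivable (intF f) x 1 /\ derive1 (intF f) x = f x.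
Proof.
move=> x_gt0; apply: (@continuous_FTC1_closed R f 0 x (x + 1)) => //.
- by rewrite ltrDl.
- apply: continuous_compact_integrable; first exact: segment_compact.
  apply: derivable_within_continuous => y; rewrite in_itv /= => /andP[y_ge0 _].
  exact: f_der.
- apply/differentiable_continuous; rewrite -derivable1_diffP.
  exact/f_der/ltW.
Qed.

Lemma intF_MVT u v : 0 < u -> u < v ->
  exists2 c, c \in `]u, v[ & intF f v - intF f u = f c * (v - u).
Proof.
move=> u_gt0 uv; have [||c c_uv] := @MVT R (intF f) f u v uv; last by exists c.
- move=> x; rewrite in_itv /= => /andP[ux _].
  have [dF <-] := intF_derive (lt_trans u_gt0 ux).
  by rewrite derive1E; apply: derivableP.
- apply: derivable_within_continuous => y; rewrite in_itv /= => /andP[uy _].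
  by have [] := intF_derive (lt_le_trans u_gt0 uy).
Qed.

Definition pair_cost (p x y : R) : R :=
  x * intF f (p + x) + y * intF f (p + x + y).

Lemma pair_cost_MVT p x y : 0 <= p -> 0 < y -> y < x ->
  exists c1 c2, [/\ 0 < c1, c1 < c2, c2 < p + x + y &
    pair_cost p x y - pair_cost p y x = y * (x - y) * (f c1 - f c2)].
Proof.
move=> p_ge0 y_gt0 yx.
have [||c1 c1_in F1] := @intF_MVT (p + y) (p + x); [lra | lra |].
have [||c2 c2_in F2] := @intF_MVT (p + x) (p + x + y); [lra | lra |].
move: c1_in c2_in; rewrite !in_itv /= => /andP[c1_gt c1_lt] /andP[c2_gt c2_lt].
exists c1, c2; split; try lra.
rewrite /pair_cost (addrAC p y x).
have -> : intF f (p + x + y) = intF f (p + x) + f c2 * (p + x + y - (p + x)).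
  by rewrite -F2; ring.
have -> : intF f (p + y) = intF f (p + x) - f c1 * (p + x - (p + y)).
  by rewrite -F1; ring.
ring.
Qed.

Lemma pair_cost_small_first B p x y :
    (forall u v, 0 <= u -> u < v -> v <= B -> f v < f u) ->
  0 <= p -> 0 < y -> y < x -> p + x + y <= B ->
  pair_cost p y x < pair_cost p x y.
Proof.
move=> f_decr p_ge0 y_gt0 yx le_B; rewrite -subr_gt0.
have [c1 [c2 [c1_gt0 c12 c2_lt ->]]] := pair_cost_MVT p_ge0 y_gt0 yx.
rewrite mulr_gt0 ?mulr_gt0 ?subr_gt0 //.
by apply: f_decr c12 _; [exact: ltW | exact: le_trans (ltW c2_lt) le_B].
Qed.

Lemma pair_cost_large_first B p x y :
    (forall u v, 0 <= u -> u < v -> v <= B -> f u < f v) ->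
  0 <= p -> 0 < y -> y < x -> p + x + y <= B ->
  pair_cost p x y < pair_cost p y x.
Proof.
move=> f_incr p_ge0 y_gt0 yx le_B; rewrite -subr_gt0 -opprB oppr_gt0.
have [c1 [c2 [c1_gt0 c12 c2_lt ->]]] := pair_cost_MVT p_ge0 y_gt0 yx.
rewrite pmulr_rlt0 ?mulr_gt0 ?subr_gt0 ?subr_lt0 //.
by apply: f_incr c12 _; [exact: ltW | exact: le_trans (ltW c2_lt) le_B].
Qed.
End PrefixIntegral.

Section PrefixSums.
Variables (R : realType) (n : nat) (a : 'I_n -> R).

Lemma psum_succ (s : 'I_n -> 'I_n) (i i1 : 'I_n) : val i1 = i.+1 ->
  psum a s i1 = a (s i1) + psum a s i.
Proof.
move=> i1E; rewrite /psum (bigD1 i1) //=; congr (_ + _); apply: eq_bigl => k.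
by rewrite andbC -val_eqE -ltn_neqAle i1E ltnS.
Qed.

Lemma psum_tperm (s : 'S_n) (i i1 j : 'I_n) : val i1 = i.+1 -> j != i ->
  psum a (tperm i i1 * s)%g j = psum a s j.
Proof.
move=> i1E; rewrite -val_eqE => /= ji.
rewrite /psum [RHS](reindex_inj (@perm_inj _ (tperm i i1))).
apply: eq_big => k; last by rewrite permM.
by case: tpermP => [->|->|]; rewrite ?i1E; lia.
Qed.

Hypothesis a_ge0 : forall i, 0 <= a i.

Lemma psum_ge_term (s : 'I_n -> 'I_n) (j : 'I_n) : a (s j) <= psum a s j.
Proof. by rewrite /psum (bigD1 j) //= lerDl sumr_ge0. Qed.

Lemma psum_le_sum (s : 'S_n) (j : 'I_n) : psum a s j <= \sum_i a i.
Proof.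
rewrite /psum [leRHS](reindex_inj (@perm_inj _ s)).
by rewrite [leRHS](bigID (fun k : 'I_n => (k <= j)%N)) /= lerDl sumr_ge0.
Qed.
End PrefixSums.

Section WeightedSums.
Variables (R : realType) (n : nat) (a : 'I_n -> R) (f : R -> R).

Lemma eq_wsum (s1 s2 : 'I_n -> 'I_n) : s1 =1 s2 -> wsum a f s1 = wsum a f s2.
Proof.
move=> s12; apply: eq_bigr => k _; rewrite s12; congr (_ * intF f _).
by apply: eq_bigr => j _; rewrite s12.
Qed.

Lemma wsum_tperm (s : 'S_n) (i i1 : 'I_n) : val i1 = i.+1 ->
  let p := psum a s i - a (s i) in
  wsum a f s - wsum a f (tperm i i1 * s)%g =
    pair_cost f p (a (s i)) (a (s i1)) - pair_cost f p (a (s i1)) (a (s i)).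
Proof.
move=> i1E p; set t := (tperm i i1 * s)%g.
have i1_neq_i : i1 != i by rewrite -val_eqE i1E /= (gtn_eqF (ltnSn i)).
have tE k : t k = s (tperm i i1 k) by rewrite permM.
have psum_t_i : psum a t i = p + a (s i1).
  apply: (addrI (a (t i1))).
  rewrite -(psum_succ _ _ i1E) psum_tperm // (psum_succ _ _ i1E) tE tpermR /p.
  ring.
rewrite /wsum -sumrB (bigD1 i) //= (bigD1 i1) //= big1 => [|j /andP[ji ji1]];
  last first.
  by rewrite psum_tperm // tE tpermD 1?eq_sym // subrr.
rewrite psum_t_i psum_tperm // (psum_succ _ _ i1E) !tE tpermL tpermR.
rewrite /pair_cost -[psum a s i](subrK (a (s i))) -/p.
by rewrite (addrC (a (s i1))) (addrAC p (a (s i1))); ring.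
Qed.
End WeightedSums.

Section Rearrangement.
Variables (R : realType) (n : nat) (a : 'I_n -> R) (f : R -> R).
Hypotheses (a_pos : forall i, 0 < a i)
  (a_incr : forall i j : 'I_n, (i < j)%N -> a i < a j)
  (f_der : forall x, 0 <= x -> derivable f x 1).

Let a_ge0 i : 0 <= a i := ltW (a_pos i).

Lemma psum_tperm_bounds (s : 'S_n) (i i1 : 'I_n) : val i1 = i.+1 ->
  let p := psum a s i - a (s i) in
  0 <= p /\ p + a (s i) + a (s i1) <= \sum_k a k.
Proof.
move=> i1E p; split; first by rewrite subr_ge0 (psum_ge_term a_ge0).
by rewrite subrK addrC -(psum_succ _ _ i1E) (psum_le_sum a_ge0).
Qed.

Section Decreasing.
Hypothesis f_decr : forall x y, 0 <= x -> x < y -> y <= \sum_i a i -> f y < f x.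

Lemma wsum_descent_lt (s : 'S_n) (i i1 : 'I_n) :
  val i1 = i.+1 -> (s i1 < s i)%N ->
  wsum a f (tperm i i1 * s)%g < wsum a f s.
Proof.
move=> i1E desc; rewrite -subr_gt0 wsum_tperm // subr_gt0.
have [p_ge0 le_sum] := psum_tperm_bounds s i1E.
apply: (pair_cost_small_first f_der f_decr p_ge0 _ _ le_sum).
  exact: a_pos.
exact: a_incr.
Qed.

Lemma wsum_id_lt (s : 'S_n) : s != 1%g -> wsum a f id < wsum a f s.
Proof.
rewrite (@eq_wsum _ _ a f id (1%g : 'S_n)) => [|i]; last by rewrite perm1.
move: s; apply: (@strict_min_of_improvable _ _ R (fun s : 'S_n => wsum a f s)).
move=> s /exists_adj_descent[i [i1 [i1E desc]]].
by exists (tperm i i1 * s)%g; apply: wsum_descent_lt.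
Qed.
End Decreasing.

Section Increasing.
Hypothesis f_incr : forall x y, 0 <= x -> x < y -> y <= \sum_i a i -> f x < f y.

Lemma wsum_ascent_lt (s : 'S_n) (i i1 : 'I_n) :
  val i1 = i.+1 -> (s i < s i1)%N ->
  wsum a f (tperm i i1 * s)%g < wsum a f s.
Proof.
move=> i1E asc; rewrite -subr_gt0 wsum_tperm // subr_gt0.
have [p_ge0 le_sum] := psum_tperm_bounds s i1E; rewrite addrAC in le_sum.
apply: (pair_cost_large_first f_der f_incr p_ge0 _ _ le_sum).
  exact: a_pos.
exact: a_incr.
Qed.

Lemma wsum_rev_lt (s : 'S_n) :
  s != rev_perm n -> wsum a f (@rev_ord n) < wsum a f s.
Proof.
rewrite (@eq_wsum _ _ a f _ (rev_perm n)) => [|i]; last by rewrite permE.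
move: s; apply: (@strict_min_of_improvable _ _ R (fun s : 'S_n => wsum a f s)).
move=> s /exists_adj_ascent[i [i1 [i1E asc]]].
by exists (tperm i i1 * s)%g; apply: wsum_ascent_lt.
Qed.
End Increasing.
End Rearrangement.

Theorem lemma3 (R : realType) (n : nat) (a : 'I_n -> R) (f : R -> R)
  (a_pos : forall i, 0 < a i)
  (a_incr : forall i j : 'I_n, (i < j)%N -> a i < a j)
  (f_pos : forall x, 0 <= x -> 0 < f x)
  (f_der : forall x, 0 <= x -> derivable f x 1)
  (f_bnd : exists m M : R, 0 < m /\ forall x, 0 <= x -> m <= f x <= M) :
  let An := \sum_(i < n) a i in
  ((forall x y, 0 <= x -> x < y -> y <= An -> f y < f x) ->
    forall pi : 'S_n, ~ (forall i, pi i = i) ->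
      wsum a f id < wsum a f pi) /\
  ((forall x y, 0 <= x -> x < y -> y <= An -> f x < f y) ->
    forall pi : 'S_n, ~ (forall i, pi i = rev_ord i) ->
      wsum a f (@rev_ord n) < wsum a f pi).
Proof.
move=> An; split => [f_decr pi pi_ne_id | f_incr pi pi_ne_rev].
- apply: (wsum_id_lt a_pos a_incr f_der f_decr).
  by apply: contra_notN pi_ne_id => /eqP-> i; rewrite perm1.
- apply: (wsum_rev_lt a_pos a_incr f_der f_incr).
  by apply: contra_notN pi_ne_rev => /eqP-> i; rewrite permE.
Qed.
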